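(* For all positive integers $m,k,r$ and all complex $z$ with $|z|<1$, $$\sum_{\substack{k_1+\cdots+k_r=k+r-1\\ k_1,\ldots,k_r\ge1}}\binom{k_r+m-2}{m-1}\mathrm{A}(k_1,\ldots,k_{r-1},k_r+m-1;z)+(-1)^r\sum_{\substack{k_1+\cdots+k_r=m+r-1\\ k_1,\ldots,k_r\ge1}}\binom{k_r+k-2}{k-1}\mathrm{A}(k_1,\ldots,k_{r-1},k_r+k-1;z)$$ $$=\sum_{j=1}^{r-1}(-1)^{j-1}\,\mathrm{A}(\{1\}_{r-1-j},m;z)\,\mathrm{A}(\{1\}_{j-1},k;z).$$
   Context: $\{1\}_a$ denotes the sequence of $a$ ones. For positive integers $k_1,\dots,k_r$ and $|z|<1$, the Kaneko–Tsumura level-two multiple polylogarithm is $\mathrm{A}(k_1,\ldots,k_r;z):=2^r\sum\frac{z^{n_r}}{n_1^{k_1}n_2^{k_2}\cdots n_r^{k_r}}$, summed over integers $1\le n_1<n_2<\cdots<n_r$ with $n_j\equiv j \pmod 2$ for every $j$. *)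

From Stdlib Require Import Reals List Arith Bool.
From Coquelicot Require Import Coquelicot.
Import ListNotations.
Open Scope R_scope.

Fixpoint psum (f : nat -> R) (M : nat) : R :=
  match M with
  | O => 0
  | S p => psum f p + f p
  end.

(* Hs [k_j; ...; k_1] M = sum over 1 <= n_1 < ... < n_j < M with
   n_i = i (mod 2) of prod_i 1 / n_i ^ k_i.
   (The list is given in REVERSED order: its head is k_j, j = its length.) *)
Fixpoint Hs (rks : list nat) (M : nat) : R :=
  match rks with
  | nil => 1
  | k :: rest =>
      psum (fun n => if (1 <=? n)%nat && Bool.eqb (Nat.odd n) (Nat.odd (S (length rest)))
                     then Hs rest n / (INR n) ^ k else 0) M
  end.

(* Coefficient of z^N in A(k_1,...,k_r; z): 2^r times the sum of all terms of
   the defining multiple sum with n_r = N. *)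
Definition Acoef (ks : list nat) (N : nat) : R :=
  match rev ks with
  | nil => 0
  | k :: rest =>
      2 ^ (length ks) *
      (if (1 <=? N)%nat && Bool.eqb (Nat.odd N) (Nat.odd (length ks))
       then Hs rest N / (INR N) ^ k else 0)
  end.

Definition Apoly (ks : list nat) (z : C) : C :=
  lim (T := CompleteNormedModule.CompleteSpace _ C_CompleteNormedModule)
      (filtermap (sum_n (fun N : nat => Cmult (RtoC (Acoef ks N)) (Cpow z N))) eventually).

Fixpoint compositions (r K : nat) : list (list nat) :=
  match r with
  | O => if (K =? 0)%nat then [nil] else nil
  | S r' => flat_map (fun k => map (cons k) (compositions r' (K - k))) (seq 1 K)
  end.

Definition Csum {T : Type} (l : list T) (f : T -> C) : C :=
  fold_right (fun x acc => Cplus (f x) acc) (RtoC 0) l.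

Definition add_last (ks : list nat) (a : nat) : list nat :=
  removelast ks ++ [last ks 0%nat + a]%nat.

Definition Cbinom (n k : nat) : C := RtoC (Binomial.C n k).

From Stdlib Require Import Reals List Arith Lia Lra FunctionalExtensionality Bool.
From Coquelicot Require Import Coquelicot.
Import ListNotations.
Open Scope R_scope.

(* The identity is proved by generating functions.  Every A(k_1,...,k_r; z) is
   the power series with the real coefficient sequence [Acoef ks], so we work
   with coefficient sequences [nat -> R] and two operations on them: the Cauchy
   product [conv] (product of power series) and the Euler operator [theta]
   (a_N |-> N a_N, i.e. z d/dz). *)

Definition rsum {T : Type} (l : list T) (f : T -> R) : R :=
  fold_right (fun x acc => f x + acc) 0 l.

Section PowerSeries.

(* Coefficient sequences of at most polynomial growth; the coefficients of
   every A(ks) are such, and their power series converge on the unit disc. *)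
Definition poly_bounded (a : nat -> R) : Prop :=
  exists M p, forall N, Rabs (a N) <= M * (INR N + 1) ^ p.

(* The sum of the power series with coefficients [a]; this is literally the
   expression defining [Apoly]. *)
Definition pseries (a : nat -> R) (z : C) : C :=
  lim (T := CompleteNormedModule.CompleteSpace _ C_CompleteNormedModule)
      (filtermap (sum_n (fun N : nat => Cmult (RtoC (a N)) (Cpow z N))) eventually).

Definition pseries_term (a : nat -> R) (z : C) (N : nat) : C :=
  Cmult (RtoC (a N)) (Cpow z N).

Lemma is_lim_seq_pow (u : nat -> R) (l : R) p :
  is_lim_seq u l -> is_lim_seq (fun n => u n ^ p) (l ^ p).
Proof.
  intros Hu. induction p as [|p IH]; simpl.
  - apply is_lim_seq_const.
  - apply is_lim_seq_mult'; auto.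
Qed.

Lemma is_lim_seq_succ_ratio : is_lim_seq (fun n => (INR n + 2) / (INR n + 1)) 1.
Proof.
  apply is_lim_seq_ext with (fun n => 1 + / (INR n + 1)).
  { intros n. pose proof (pos_INR n). field. lra. }
  assert (Hsum : is_lim_seq (fun n => 1 + / (INR n + 1)) (1 + 0)).
  2:{ rewrite Rplus_0_r in Hsum. exact Hsum. }
  apply is_lim_seq_plus'; [apply is_lim_seq_const|].
  assert (Hinv : is_lim_seq (fun n => / INR n) 0).
  { replace (Finite 0) with (Rbar_inv p_infty) by reflexivity.
    apply is_lim_seq_inv; [apply is_lim_seq_INR | discriminate]. }
  apply is_lim_seq_incr_1 in Hinv.
  eapply is_lim_seq_ext; [|exact Hinv]. intros n. cbv beta. rewrite S_INR. reflexivity.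
Qed.

(* (n+1)^p t^n is summable for 0 < t < 1, by d'Alembert's ratio test. *)
Lemma ex_series_poly_geom p t : 0 < t < 1 -> ex_series (fun n => (INR n + 1) ^ p * t ^ n).
Proof.
  intros Ht.
  assert (Hpos : forall n, 0 < (INR n + 1) ^ p * t ^ n).
  { intros n. pose proof (pos_INR n). apply Rmult_lt_0_compat; apply pow_lt; lra. }
  eapply ex_series_ext.
  2: apply (ex_series_DAlembert (fun n => (INR n + 1) ^ p * t ^ n) t).
  - intros n. simpl. rewrite Rabs_pos_eq; [reflexivity | apply Rlt_le, Hpos].
  - lra.
  - intros n. apply Rgt_not_eq, Hpos.
  - apply is_lim_seq_ext with (fun n => ((INR n + 2) / (INR n + 1)) ^ p * t).
    { intros n. pose proof (pos_INR n). pose proof (Hpos n). pose proof (Hpos (S n)).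
      rewrite Rabs_pos_eq by (apply Rlt_le, Rdiv_lt_0_compat; assumption).
      rewrite S_INR. unfold Rdiv. rewrite Rpow_mult_distr, pow_inv.
      replace (INR n + 1 + 1) with (INR n + 2) by ring. simpl. field.
      repeat split; try apply pow_nonzero; lra. }
    replace (Finite t) with (Rbar_mult (1 ^ p) t) by (rewrite pow1; simpl; f_equal; ring).
    apply is_lim_seq_scal_r, is_lim_seq_pow, is_lim_seq_succ_ratio.
Qed.

Lemma poly_bounded_abs_series a z :
  poly_bounded a -> Cmod z < 1 -> ex_series (fun N => Rabs (a N) * Cmod z ^ N).
Proof.
  intros [M [p HM]] Hz.
  set (t := (1 + Cmod z) / 2).
  pose proof (Cmod_ge_0 z).
  assert (Ht : 0 < t < 1) by (unfold t; lra).
  apply (ex_series_le (K := R_AbsRing) (V := R_CompleteNormedModule) _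
           (fun n => M * ((INR n + 1) ^ p * t ^ n))).
  - intros n. change norm with Rabs.
    rewrite Rabs_pos_eq by (apply Rmult_le_pos; [apply Rabs_pos | apply pow_le; lra]).
    rewrite <- Rmult_assoc. apply Rmult_le_compat.
    + apply Rabs_pos.
    + apply pow_le; lra.
    + apply HM.
    + apply pow_incr. unfold t; lra.
  - apply (ex_series_scal_l (K := R_AbsRing) (V := R_NormedModule)), ex_series_poly_geom, Ht.
Qed.

Lemma lim_partial_sums (b : nat -> C) (l : C) :
  is_series b l ->
  lim (T := CompleteNormedModule.CompleteSpace _ C_CompleteNormedModule)
      (filtermap (sum_n b) eventually) = l.
Proof.
  intros Hb. unfold is_series in Hb.
  assert (PF : ProperFilter (filtermap (sum_n b) eventually))
    by (apply filtermap_proper_filter; apply eventually_filter).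
  assert (Hcauchy : cauchy (T := CompleteNormedModule.CompleteSpace _ C_CompleteNormedModule)
                      (filtermap (sum_n b) eventually)).
  { apply cauchy_distance. intros e.
    destruct (Hb (ball l (pos_div_2 e))) as [N HN]; [exists (pos_div_2 e); tauto|].
    exists (ball l (pos_div_2 e)). split; [exists N; exact HN|].
    intros u v Hu Hv. replace (pos e) with (pos_div_2 e + pos_div_2 e) by (simpl; lra).
    apply ball_triangle with l; [apply ball_sym|]; assumption. }
  pose proof (complete_cauchy (T := CompleteNormedModule.CompleteSpace _ C_CompleteNormedModule)
                           _ PF Hcauchy) as Hlim.
  apply (is_filter_lim_unique (K := C_AbsRing) (V := C_NormedModule)
           (F := filtermap (sum_n b) eventually)); [|exact Hb].
  intros P [eps HP]. eapply filter_imp; [|apply (Hlim eps)]. intros x Hx. apply HP, Hx.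
Qed.

Lemma Cmod_pseries_term a z N : Cmod (pseries_term a z N) = Rabs (a N) * Cmod z ^ N.
Proof. unfold pseries_term. rewrite Cmod_mult, Cmod_R, Cmod_pow. reflexivity. Qed.

Lemma pseries_abs_summable a z :
  poly_bounded a -> Cmod z < 1 -> ex_series (fun n => Cmod (pseries_term a z n)).
Proof.
  intros Ha Hz. eapply ex_series_ext; [|apply (poly_bounded_abs_series a z Ha Hz)].
  intros n. rewrite Cmod_pseries_term. reflexivity.
Qed.

Lemma pseries_correct a z :
  poly_bounded a -> Cmod z < 1 -> is_series (pseries_term a z) (pseries a z).
Proof.
  intros Ha Hz.
  assert (Hex : ex_series (K := C_AbsRing) (V := C_NormedModule) (pseries_term a z)).
  { apply (ex_series_le (K := C_AbsRing) (V := C_CompleteNormedModule) _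
             (fun N => Rabs (a N) * Cmod z ^ N)).
    - intros n. change norm with Cmod. rewrite Cmod_pseries_term. apply Rle_refl.
    - apply poly_bounded_abs_series; assumption. }
  destruct Hex as [l Hl]. unfold pseries. fold (pseries_term a z).
  rewrite (lim_partial_sums _ _ Hl). exact Hl.
Qed.

Lemma pseries_unique a z l : is_series (pseries_term a z) l -> pseries a z = l.
Proof. intros H. unfold pseries. fold (pseries_term a z). apply lim_partial_sums, H. Qed.

End PowerSeries.

Section CauchyProduct.

Lemma C_ext (a b : C) : Re a = Re b -> Im a = Im b -> a = b.
Proof. destruct a, b; simpl; intros; subst; reflexivity. Qed.

Lemma sum_n_Rplus (u v : nat -> R) n : sum_n (fun k => u k + v k) n = sum_n u n + sum_n v n.
Proof. exact (sum_n_plus u v n). Qed.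

Lemma sum_n_Rminus (u v : nat -> R) n : sum_n (fun k => u k - v k) n = sum_n u n - sum_n v n.
Proof.
  induction n; [rewrite !sum_O; reflexivity|].
  rewrite !sum_Sn, IHn. unfold plus; simpl. ring.
Qed.

Lemma sum_n_Rmult_l (u : nat -> R) c n : c * sum_n u n = sum_n (fun k => c * u k) n.
Proof. symmetry. exact (sum_n_mult_l (K := R_Ring) c u n). Qed.

Lemma sum_n_Rmult_r (u : nat -> R) c n : sum_n u n * c = sum_n (fun k => u k * c) n.
Proof. symmetry. exact (sum_n_mult_r (K := R_Ring) c u n). Qed.

Lemma RtoC_sum_n_mult (u : nat -> R) (w : C) n :
  Cmult (RtoC (sum_n u n)) w = sum_n (fun k => Cmult (RtoC (u k)) w) n.
Proof.
  induction n; [rewrite !sum_O; reflexivity|].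
  rewrite !sum_Sn, <- IHn. unfold plus. simpl. apply C_ext; simpl; ring.
Qed.

Lemma Re_sum_n (a : nat -> C) N : Re (sum_n a N) = sum_n (fun n => Re (a n)) N.
Proof. induction N; [rewrite !sum_O | rewrite !sum_Sn, <- IHN]; reflexivity. Qed.

Lemma Im_sum_n (a : nat -> C) N : Im (sum_n a N) = sum_n (fun n => Im (a n)) N.
Proof. induction N; [rewrite !sum_O | rewrite !sum_Sn, <- IHN]; reflexivity. Qed.

Lemma Rabs_Im_le_Cmod (c : C) : Rabs (Im c) <= Cmod c.
Proof.
  destruct c as [x y]. unfold Cmod. simpl.
  rewrite <- sqrt_Rsqr_abs. apply sqrt_le_1_alt. unfold Rsqr. nra.
Qed.

Lemma is_series_C_iff (a : nat -> C) (l : C) :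
  is_series a l <->
  is_series (fun n => Re (a n)) (Re l) /\ is_series (fun n => Im (a n)) (Im l).
Proof.
  split.
  - intros H. split; intros P [eps HP].
    + destruct (H (fun x => P (Re x))) as [N HN].
      { exists eps. intros y [Hy _]. apply HP, Hy. }
      exists N. intros n Hn. simpl. rewrite <- Re_sum_n. apply HN, Hn.
    + destruct (H (fun x => P (Im x))) as [N HN].
      { exists eps. intros y [_ Hy]. apply HP, Hy. }
      exists N. intros n Hn. simpl. rewrite <- Im_sum_n. apply HN, Hn.
  - intros [Hre Him] P [eps HP].
    destruct (Hre (ball (Re l) eps)) as [N1 HN1]; [exists eps; tauto|].
    destruct (Him (ball (Im l) eps)) as [N2 HN2]; [exists eps; tauto|].
    exists (max N1 N2). intros n Hn. apply HP. split.
    + pose proof (HN1 n ltac:(lia)) as X. simpl in X. rewrite <- Re_sum_n in X. exact X.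
    + pose proof (HN2 n ltac:(lia)) as X. simpl in X. rewrite <- Im_sum_n in X. exact X.
Qed.

(* Cauchy product of absolutely convergent complex series (Mertens), reduced
   to the four real products of real and imaginary parts. *)
Lemma is_series_C_mult (A B : nat -> C) la lb :
  is_series A la -> is_series B lb ->
  ex_series (fun n => Cmod (A n)) -> ex_series (fun n => Cmod (B n)) ->
  is_series (fun n => sum_n (fun k => Cmult (A k) (B (n - k)%nat)) n) (Cmult la lb).
Proof.
  intros HA HB EA EB.
  apply is_series_C_iff in HA as [HA1 HA2]. apply is_series_C_iff in HB as [HB1 HB2].
  assert (Habs : forall (U : nat -> C) f, (forall c, Rabs (f c) <= Cmod c) ->
                   ex_series (fun n => Cmod (U n)) -> ex_series (fun n => Rabs (f (U n)))).
  { intros U f Hf EU.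
    apply (ex_series_le (K := R_AbsRing) (V := R_CompleteNormedModule) _ (fun n => Cmod (U n))); auto.
    intros n. change norm with Rabs. rewrite Rabs_Rabsolu. apply Hf. }
  pose proof (is_series_mult _ _ _ _ HA1 HB1 (Habs _ _ re_le_Cmod EA) (Habs _ _ re_le_Cmod EB)) as M11.
  pose proof (is_series_mult _ _ _ _ HA2 HB2 (Habs _ _ Rabs_Im_le_Cmod EA) (Habs _ _ Rabs_Im_le_Cmod EB)) as M22.
  pose proof (is_series_mult _ _ _ _ HA1 HB2 (Habs _ _ re_le_Cmod EA) (Habs _ _ Rabs_Im_le_Cmod EB)) as M12.
  pose proof (is_series_mult _ _ _ _ HA2 HB1 (Habs _ _ Rabs_Im_le_Cmod EA) (Habs _ _ re_le_Cmod EB)) as M21.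
  apply is_series_C_iff. split.
  - eapply is_series_ext; [|exact (is_series_minus _ _ _ _ M11 M22)].
    intros n. rewrite Re_sum_n, <- !sum_n_Reals. unfold plus, opp; simpl.
    rewrite sum_n_Rminus. unfold Re, Im. ring.
  - eapply is_series_ext; [|exact (is_series_plus _ _ _ _ M12 M21)].
    intros n. rewrite Im_sum_n, <- !sum_n_Reals. unfold plus; simpl.
    rewrite sum_n_Rplus. unfold Re, Im. ring.
Qed.

Definition conv (f g : nat -> R) (N : nat) : R := sum_n (fun i => f i * g (N - i)%nat) N.

Lemma poly_bounded_nonneg a M p : (forall N, Rabs (a N) <= M * (INR N + 1) ^ p) -> 0 <= M.
Proof.
  intros H. specialize (H O). simpl INR in H. rewrite Rplus_0_l, pow1 in H.
  pose proof (Rabs_pos (a O)). lra.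
Qed.

Lemma poly_bounded_zero : poly_bounded (fun _ => 0).
Proof. exists 0, O. intros. rewrite Rabs_R0. lra. Qed.

Lemma poly_bounded_plus a b : poly_bounded a -> poly_bounded b -> poly_bounded (fun N => a N + b N).
Proof.
  intros [M1 [p1 H1]] [M2 [p2 H2]]. exists (M1 + M2), (p1 + p2)%nat. intros N.
  pose proof (poly_bounded_nonneg _ _ _ H1). pose proof (poly_bounded_nonneg _ _ _ H2).
  assert (X : 1 <= INR N + 1) by (pose proof (pos_INR N); lra).
  assert (G1 : 1 <= (INR N + 1) ^ p1) by (apply pow_R1_Rle; lra).
  assert (G2 : 1 <= (INR N + 1) ^ p2) by (apply pow_R1_Rle; lra).
  specialize (H1 N). specialize (H2 N).
  set (X1 := (INR N + 1) ^ p1) in *. set (X2 := (INR N + 1) ^ p2) in *.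
  assert (B1 : M1 * X1 <= M1 * X1 * X2).
  { rewrite <- (Rmult_1_r (M1 * X1)) at 1. apply Rmult_le_compat_l; nra. }
  assert (B2 : M2 * X2 <= M2 * X2 * X1).
  { rewrite <- (Rmult_1_r (M2 * X2)) at 1. apply Rmult_le_compat_l; nra. }
  eapply Rle_trans; [apply Rabs_triang|]. rewrite pow_add. fold X1 X2. nra.
Qed.

Lemma poly_bounded_scal c a : poly_bounded a -> poly_bounded (fun N => c * a N).
Proof.
  intros [M [p H]]. exists (Rabs c * M), p. intros N. rewrite Rabs_mult, Rmult_assoc.
  apply Rmult_le_compat_l; [apply Rabs_pos | apply H].
Qed.

Lemma Rabs_sum_n_le (u : nat -> R) c N :
  (forall i, (i <= N)%nat -> Rabs (u i) <= c) -> Rabs (sum_n u N) <= INR (S N) * c.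
Proof.
  induction N; intros H.
  - rewrite sum_O. simpl. rewrite Rmult_1_l. apply H. lia.
  - rewrite sum_Sn. change (Rabs (sum_n u N + u (S N)) <= INR (S (S N)) * c).
    eapply Rle_trans; [apply Rabs_triang|].
    rewrite (S_INR (S N)), Rmult_plus_distr_r, Rmult_1_l.
    apply Rplus_le_compat; [apply IHN; intros; apply H; lia | apply H; lia].
Qed.

Lemma poly_bounded_conv f g : poly_bounded f -> poly_bounded g -> poly_bounded (conv f g).
Proof.
  intros [M1 [p1 H1]] [M2 [p2 H2]].
  pose proof (poly_bounded_nonneg _ _ _ H1). pose proof (poly_bounded_nonneg _ _ _ H2).
  exists (M1 * M2), (S (p1 + p2)). intros N. unfold conv.
  assert (Hmono : forall i p, (i <= N)%nat -> (INR i + 1) ^ p <= (INR N + 1) ^ p).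
  { intros i p Hi. apply pow_incr. apply le_INR in Hi. pose proof (pos_INR i). lra. }
  eapply Rle_trans; [apply (Rabs_sum_n_le _ (M1 * M2 * (INR N + 1) ^ (p1 + p2)))|].
  - intros i Hi. rewrite Rabs_mult, pow_add.
    replace (M1 * M2 * ((INR N + 1) ^ p1 * (INR N + 1) ^ p2))
      with ((M1 * (INR N + 1) ^ p1) * (M2 * (INR N + 1) ^ p2)) by ring.
    apply Rmult_le_compat; try apply Rabs_pos.
    + eapply Rle_trans; [apply H1|]. apply Rmult_le_compat_l; [lra | apply Hmono; lia].
    + eapply Rle_trans; [apply H2|]. apply Rmult_le_compat_l; [lra | apply Hmono; lia].
  - rewrite S_INR. simpl pow. lra.
Qed.

End CauchyProduct.

Section PseriesAlgebra.

Variable z : C.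
Hypothesis Hz : Cmod z < 1.

Lemma pseries_plus a b : poly_bounded a -> poly_bounded b ->
  pseries (fun N => a N + b N) z = Cplus (pseries a z) (pseries b z).
Proof.
  intros Ha Hb. apply pseries_unique.
  eapply is_series_ext;
    [|apply (is_series_plus _ _ _ _ (pseries_correct _ _ Ha Hz) (pseries_correct _ _ Hb Hz))].
  intros n. unfold pseries_term. apply C_ext; simpl; ring.
Qed.

Lemma pseries_scal c a : poly_bounded a ->
  pseries (fun N => c * a N) z = Cmult (RtoC c) (pseries a z).
Proof.
  intros Ha. apply pseries_unique.
  eapply is_series_ext;
    [|apply (is_series_scal (K := C_AbsRing) (RtoC c) _ _ (pseries_correct _ _ Ha Hz))].
  intros n. unfold pseries_term. change scal with Cmult. apply C_ext; simpl; ring.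
Qed.

Lemma pseries_zero : pseries (fun _ => 0) z = RtoC 0.
Proof.
  rewrite (functional_extensionality (fun _ : nat => 0) (fun N => 0 * 0)) by (intros; ring).
  rewrite pseries_scal by apply poly_bounded_zero. apply C_ext; simpl; ring.
Qed.

Lemma pseries_conv f g : poly_bounded f -> poly_bounded g ->
  pseries (conv f g) z = Cmult (pseries f z) (pseries g z).
Proof.
  intros Hf Hg. apply pseries_unique.
  eapply is_series_ext;
    [|apply (is_series_C_mult _ _ _ _ (pseries_correct _ _ Hf Hz) (pseries_correct _ _ Hg Hz)
               (pseries_abs_summable _ _ Hf Hz) (pseries_abs_summable _ _ Hg Hz))].
  intros n. unfold pseries_term at 3, conv. rewrite RtoC_sum_n_mult.
  apply sum_n_ext_loc. intros k Hk. unfold pseries_term.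
  replace (Cpow z n) with (Cmult (Cpow z k) (Cpow z (n - k)))
    by (rewrite <- Cpow_add_r; f_equal; lia).
  apply C_ext; simpl; ring.
Qed.

End PseriesAlgebra.

(* Goals produced by Coquelicot's generic [sum_n] lemmas are equalities in the
   carrier of [R_AbelianMonoid]; [ring] needs them restated over [R]. *)
Ltac R_ring := match goal with |- ?a = ?b => change (@eq R a b); ring end.

Section FiniteSums.

Lemma rsum_app {T} (l1 l2 : list T) f : rsum (l1 ++ l2) f = rsum l1 f + rsum l2 f.
Proof. induction l1; simpl; [ring | rewrite IHl1; ring]. Qed.

Lemma rsum_map {T U} (h : T -> U) l f : rsum (map h l) f = rsum l (fun x => f (h x)).
Proof. induction l; simpl; [|rewrite IHl]; reflexivity. Qed.

Lemma rsum_flat_map {T U} (g : T -> list U) l f :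
  rsum (flat_map g l) f = rsum l (fun x => rsum (g x) f).
Proof. induction l; simpl; [|rewrite rsum_app, IHl]; reflexivity. Qed.

Lemma rsum_ext_in {T} (l : list T) f g : (forall x, In x l -> f x = g x) -> rsum l f = rsum l g.
Proof. induction l; simpl; intros H; [|rewrite H, IHl]; auto. Qed.

Lemma rsum_ext {T} (l : list T) f g : (forall x, f x = g x) -> rsum l f = rsum l g.
Proof. intros; apply rsum_ext_in; auto. Qed.

Lemma rsum_plus {T} (l : list T) f g : rsum l (fun x => f x + g x) = rsum l f + rsum l g.
Proof. induction l; simpl; [ring | rewrite IHl; ring]. Qed.

Lemma rsum_scal {T} (l : list T) c f : rsum l (fun x => c * f x) = c * rsum l f.
Proof. induction l; simpl; [ring | rewrite IHl; ring]. Qed.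

Lemma rsum_zero {T} (l : list T) f : (forall x, In x l -> f x = 0) -> rsum l f = 0.
Proof. induction l; simpl; intros H; [|rewrite H, IHl]; auto; ring. Qed.

Lemma rsum_seq_first (K : nat) g : rsum (seq 1 (S K)) g = g 1%nat + rsum (seq 1 K) (fun k => g (S k)).
Proof. simpl. rewrite <- seq_shift, rsum_map. reflexivity. Qed.

Lemma rsum_seq_last (K : nat) g : rsum (seq 1 (S K)) g = rsum (seq 1 K) g + g (S K).
Proof. rewrite seq_S, rsum_app. simpl. ring. Qed.

Lemma rsum_seq_rev n g : rsum (seq 1 n) g = rsum (seq 1 n) (fun j => g (S n - j)%nat).
Proof.
  revert g. induction n; intros g; [reflexivity|].
  rewrite rsum_seq_last, rsum_seq_first, IHn.
  replace (S (S n) - 1)%nat with (S n) by lia. rewrite Rplus_comm. reflexivity.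
Qed.

Lemma rsum_triangle_swap (K : nat) (h : nat -> nat -> R) :
  rsum (seq 1 K) (fun k => rsum (seq 1 (K - k)) (fun l => h k l)) =
  rsum (seq 1 K) (fun l => rsum (seq 1 (K - l)) (fun k => h k l)).
Proof.
  revert h. induction K; intros h; [reflexivity|].
  rewrite rsum_seq_first. replace (S K - 1)%nat with K by lia.
  rewrite (rsum_ext (seq 1 K) (fun k => rsum (seq 1 (S K - S k)) (fun l => h (S k) l))
                    (fun k => rsum (seq 1 (K - k)) (fun l => h (S k) l)))
    by reflexivity.
  rewrite (IHK (fun k l => h (S k) l)).
  rewrite rsum_seq_last. replace (S K - S K)%nat with O by lia. simpl rsum at 3.
  rewrite Rplus_0_r, <- rsum_plus.
  apply rsum_ext_in. intros l Hl. apply in_seq in Hl.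
  replace (S K - l)%nat with (S (K - l)) by lia. rewrite rsum_seq_first. reflexivity.
Qed.

Lemma rsum_telescope n (g : nat -> R) :
  rsum (seq 1 n) (fun j => (-1) ^ (j - 1) * (g j + g (j - 1)%nat)) = g O - (-1) ^ n * g n.
Proof.
  induction n; [simpl; ring|].
  rewrite rsum_seq_last, IHn. replace (S n - 1)%nat with n by lia. simpl pow. ring.
Qed.

Lemma sum_n_first (a : nat -> R) N : sum_n a (S N) = a O + sum_n (fun i => a (S i)) N.
Proof.
  induction N; [rewrite sum_Sn, !sum_O; reflexivity|].
  rewrite sum_Sn, IHN, (sum_Sn (fun i => a (S i))). unfold plus; simpl. ring.
Qed.

Lemma sum_n_zero (u : nat -> R) N : (forall i, (i <= N)%nat -> u i = 0) -> sum_n u N = 0.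
Proof.
  induction N; intros H; [rewrite sum_O; apply H; lia|].
  rewrite sum_Sn, IHN by (intros; apply H; lia). rewrite H by lia. unfold plus; simpl; ring.
Qed.

Lemma sum_n_rev (u : nat -> R) N : sum_n (fun i => u (N - i)%nat) N = sum_n u N.
Proof.
  induction N; [rewrite !sum_O; reflexivity|].
  rewrite sum_n_first. simpl (S N - 0)%nat.
  rewrite (sum_n_ext (fun i => u (S N - S i)%nat) (fun i => u (N - i)%nat)) by reflexivity.
  rewrite IHN, sum_Sn. unfold plus; simpl; ring.
Qed.

Lemma sum_n_shift (F : nat -> R) j M :
  sum_n (fun i => if (j <=? i)%nat then F i else 0) (j + M) = sum_n (fun l => F (j + l)%nat) M.
Proof.
  revert F. induction j; intros F; [apply sum_n_ext; reflexivity|].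
  simpl (S j + M)%nat. rewrite sum_n_first, Rplus_0_l.
  exact (IHj (fun i => F (S i))).
Qed.

Lemma sum_n_truncate (F : nat -> R) i N : (i <= N)%nat ->
  sum_n F i = sum_n (fun j => if (j <=? i)%nat then F j else 0) N.
Proof.
  induction N; intros H.
  - replace i with O by lia. rewrite !sum_O. reflexivity.
  - destruct (Nat.eq_dec i (S N)) as [->|Hne].
    + apply sum_n_ext_loc. intros n Hn. apply Nat.leb_le in Hn. rewrite Hn. reflexivity.
    + rewrite sum_Sn, <- IHN by lia. replace (S N <=? i)%nat with false
        by (symmetry; apply Nat.leb_gt; lia).
      symmetry. apply Rplus_0_r.
Qed.

End FiniteSums.

Section SequenceAlgebra.

(* The Euler operator z d/dz on coefficient sequences. *)
Definition theta (f : nat -> R) (N : nat) : R := INR N * f N.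

Definition unit_seq (N : nat) : R := if (N =? 0)%nat then 1 else 0.

Lemma conv_comm f g : conv f g = conv g f.
Proof.
  apply functional_extensionality. intros N. unfold conv.
  rewrite <- sum_n_rev. apply sum_n_ext_loc. intros i Hi.
  replace (N - (N - i))%nat with i by lia. apply Rmult_comm.
Qed.

(* Associativity: both sides are the sum of f j g (i-j) h (N-i) over
   j <= i <= N, summed in the two possible orders. *)
Lemma conv_assoc f g h : conv (conv f g) h = conv f (conv g h).
Proof.
  apply functional_extensionality. intros N. unfold conv.
  transitivity (sum_n (fun i => sum_n (fun j =>
      if (j <=? i)%nat then f j * g (i - j)%nat * h (N - i)%nat else 0) N) N).
  - apply sum_n_ext_loc. intros i Hi. rewrite sum_n_Rmult_r, (sum_n_truncate _ i N Hi).
    apply sum_n_ext. intros j. destruct (j <=? i)%nat; R_ring.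
  - rewrite sum_n_switch. apply sum_n_ext_loc. intros j Hj.
    rewrite sum_n_Rmult_l. replace N with (j + (N - j))%nat at 1 by lia.
    rewrite (sum_n_shift (fun i => f j * g (i - j)%nat * h (N - i)%nat) j (N - j)).
    apply sum_n_ext. intros l.
    replace (j + l - j)%nat with l by lia.
    replace (N - (j + l))%nat with (N - j - l)%nat by lia. R_ring.
Qed.

Lemma conv_unit_r f : conv f unit_seq = f.
Proof.
  apply functional_extensionality. intros N. unfold conv. destruct N.
  - rewrite sum_O. unfold unit_seq. simpl. ring.
  - rewrite sum_Sn, sum_n_zero.
    + replace (S N - S N)%nat with O by lia. unfold plus, unit_seq; simpl. ring.
    + intros i Hi. unfold unit_seq.
      replace (S N - i =? 0)%nat with false by (symmetry; apply Nat.eqb_neq; lia). ring.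
Qed.

Lemma conv_unit_l f : conv unit_seq f = f.
Proof. rewrite conv_comm. apply conv_unit_r. Qed.

Lemma conv_left_comm f g h : conv f (conv g h) = conv g (conv f h).
Proof. rewrite <- conv_assoc, (conv_comm f g), conv_assoc. reflexivity. Qed.

Lemma conv_scal_r f c g : conv f (fun N => c * g N) = fun N => c * conv f g N.
Proof.
  apply functional_extensionality. intros N. unfold conv. rewrite sum_n_Rmult_l.
  apply sum_n_ext. intros; R_ring.
Qed.

Lemma conv_rsum_r {T} f (l : list T) (G : T -> nat -> R) :
  conv f (fun N => rsum l (fun x => G x N)) = fun N => rsum l (fun x => conv f (G x) N).
Proof.
  apply functional_extensionality. intros N. induction l as [|x l IH]; simpl.
  - unfold conv. apply sum_n_zero. intros; ring.
  - rewrite <- IH. unfold conv. rewrite <- sum_n_Rplus. apply sum_n_ext. intros; R_ring.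
Qed.

Lemma conv_at0 f g : conv f g O = f O * g O.
Proof. unfold conv. rewrite sum_O. reflexivity. Qed.

(* [theta] is a derivation for [conv]: N = i + (N - i). *)
Lemma theta_conv f g : theta (conv f g) = fun N => conv (theta f) g N + conv f (theta g) N.
Proof.
  apply functional_extensionality. intros N. unfold theta, conv.
  rewrite <- sum_n_Rplus, sum_n_Rmult_l.
  apply sum_n_ext_loc. intros i Hi. rewrite minus_INR by lia. R_ring.
Qed.

Lemma theta_rsum {T} (l : list T) (F : T -> nat -> R) :
  theta (fun N => rsum l (fun x => F x N)) = fun N => rsum l (fun x => theta (F x) N).
Proof. apply functional_extensionality. intros N. unfold theta. rewrite <- rsum_scal. reflexivity. Qed.

(* A sequence is determined by its constant term and its image under [theta];
   this replaces integration of the differential relations. *)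
Lemma theta_inj f g : f O = g O -> theta f = theta g -> f = g.
Proof.
  intros H0 H. apply functional_extensionality. intros [|N]; auto.
  apply (f_equal (fun h => h (S N))) in H. unfold theta in H.
  apply Rmult_eq_reg_l in H; auto. apply not_0_INR; lia.
Qed.

End SequenceAlgebra.

Section LevelTwoCoefficients.

(* Coefficients of A(ks; z), with the empty word giving the constant series 1
   ([Acoef nil] is 0, which is not the neutral element of [conv]). *)
Definition acoef (ks : list nat) : nat -> R :=
  match ks with [] => unit_seq | _ :: _ => Acoef ks end.

(* Coefficients of J(z) = 2z/(1-z^2) = sum over odd n of 2 z^n. *)
Definition odd_two (N : nat) : R := if Nat.odd N then 2 else 0.

Lemma acoef_snoc ks y : acoef (ks ++ [y]) = Acoef (ks ++ [y]).
Proof. destruct ks; reflexivity. Qed.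

Lemma Acoef_snoc ks y N : Acoef (ks ++ [y]) N = 2 ^ (S (length ks)) *
  (if (1 <=? N)%nat && Bool.eqb (Nat.odd N) (Nat.odd (S (length ks)))
   then Hs (rev ks) N / INR N ^ y else 0).
Proof.
  unfold Acoef. rewrite rev_app_distr. simpl (rev [y]). simpl app.
  rewrite length_app. simpl length. rewrite Nat.add_1_r. reflexivity.
Qed.

Lemma psum_succ f N : psum f (S N) = sum_n f N.
Proof.
  induction N; [simpl; rewrite sum_O; ring|].
  simpl psum. rewrite sum_Sn, <- IHN. reflexivity.
Qed.

Lemma psum_scal c f N : psum (fun n => c * f n) N = c * psum f N.
Proof. induction N; simpl; [ring | rewrite IHN; ring]. Qed.

Lemma acoef_support ks n : Nat.odd n <> Nat.odd (length ks) -> acoef ks n = 0.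
Proof.
  intros H. destruct ks as [|k ks'].
  - unfold acoef, unit_seq. destruct n; [simpl in H; congruence | reflexivity].
  - unfold acoef, Acoef. destruct (rev (k :: ks')); [reflexivity|].
    replace (Bool.eqb (Nat.odd n) (Nat.odd (length (k :: ks')))) with false
      by (symmetry; apply eqb_false_iff; exact H).
    rewrite andb_false_r. ring.
Qed.

Lemma acoef_at0 ks : ks <> [] -> acoef ks O = 0.
Proof.
  intros H. destruct ks as [|k ks']; [congruence|].
  unfold acoef, Acoef. destruct (rev (k :: ks')); [reflexivity | simpl; ring].
Qed.

Lemma Hs_partial_sum ks N : (1 <= N)%nat -> 2 ^ (length ks) * Hs (rev ks) N = psum (acoef ks) N.
Proof.
  intros HN. destruct ks as [|k0 ks'].
  - destruct N as [|N]; [lia|]. rewrite psum_succ. clear HN. simpl.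
    induction N; [rewrite sum_O; unfold unit_seq; simpl; ring|].
    rewrite sum_Sn, <- IHN. unfold plus, unit_seq; simpl; ring.
  - unfold acoef, Acoef. destruct (rev (k0 :: ks')) as [|k rest] eqn:E;
      apply (f_equal (@length nat)) in E; rewrite length_rev in E; simpl in E; [lia|].
    simpl length. rewrite E. simpl Hs. rewrite <- psum_scal. reflexivity.
Qed.

Lemma theta_acoef_succ ks y : theta (acoef (ks ++ [S y])) = acoef (ks ++ [y]).
Proof.
  apply functional_extensionality. intros N. unfold theta. rewrite !acoef_snoc, !Acoef_snoc.
  destruct ((1 <=? N)%nat && _) eqn:E; [|ring].
  apply andb_prop in E as [E1 _]. apply Nat.leb_le in E1.
  assert (INR N <> 0) by (apply not_0_INR; lia).
  simpl pow. field. split; auto. apply pow_nonzero; auto.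
Qed.

Lemma conv_odd_two_parity (g : nat -> R) (b : bool) N :
  (forall n, Nat.odd n <> b -> g n = 0) ->
  conv odd_two g N = if Bool.eqb (Nat.odd N) b then 0 else 2 * sum_n g N.
Proof.
  intros Hg. rewrite conv_comm. unfold conv.
  assert (Hterm : forall i, (i <= N)%nat -> g i * odd_two (N - i) =
            if xorb (Nat.odd N) b then 2 * g i else 0).
  { intros i Hi. destruct (Bool.bool_dec (Nat.odd i) b) as [e|e].
    - unfold odd_two. rewrite Nat.odd_sub, e by exact Hi.
      destruct (xorb (Nat.odd N) b); ring.
    - rewrite Hg by exact e. destruct (xorb _ _); ring. }
  rewrite (sum_n_ext_loc _ _ N Hterm).
  destruct (Nat.odd N), b; simpl;
    solve [apply sum_n_zero; reflexivity | rewrite sum_n_Rmult_l; reflexivity].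
Qed.

Lemma theta_acoef_one ks : theta (acoef (ks ++ [1%nat])) = conv odd_two (acoef ks).
Proof.
  apply functional_extensionality. intros N.
  rewrite (conv_odd_two_parity _ (Nat.odd (length ks))) by apply acoef_support.
  unfold theta. rewrite acoef_snoc, Acoef_snoc, Nat.odd_succ, <- Nat.negb_odd.
  destruct N as [|N'].
  - simpl. destruct (Nat.odd (length ks)) eqn:EL; simpl; [|ring].
    rewrite sum_O, acoef_support by (rewrite EL; discriminate). ring.
  - set (N := S N').
    assert (HN : INR N <> 0) by (apply not_0_INR; unfold N; lia).
    assert (Hsum : Nat.odd N <> Nat.odd (length ks) ->
                   sum_n (acoef ks) N = 2 ^ length ks * Hs (rev ks) N).
    { intros Hpar. rewrite Hs_partial_sum by (unfold N; lia). rewrite <- psum_succ.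
      change (psum (acoef ks) (S N)) with (psum (acoef ks) N + acoef ks N).
      rewrite (acoef_support ks N Hpar). R_ring. }
    simpl (1 <=? N)%nat. rewrite andb_true_l.
    destruct (Nat.odd N) eqn:EN, (Nat.odd (length ks)) eqn:EL; cbn [Bool.eqb negb]; try ring;
      rewrite Hsum by discriminate;
      change (2 ^ S (length ks)) with (2 * 2 ^ length ks); rewrite pow_1; field; exact HN.
Qed.

Lemma psum_bounds F N c : (forall n, (n < N)%nat -> 0 <= F n <= c) -> 0 <= psum F N <= INR N * c.
Proof.
  induction N; intros H; [simpl; lra|].
  simpl psum. rewrite S_INR. pose proof (H N ltac:(lia)).
  assert (0 <= psum F N <= INR N * c) by (apply IHN; intros; apply H; lia). lra.
Qed.

Lemma term_le_Hs rest N y : (1 <= N)%nat -> 0 <= Hs rest N -> 0 <= Hs rest N / INR N ^ y <= Hs rest N.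
Proof.
  intros HN H0. assert (Hn1 : 1 <= INR N) by (apply (le_INR 1); exact HN).
  assert (Hp : 1 <= INR N ^ y) by (apply pow_R1_Rle; lra).
  split.
  - apply Rmult_le_pos; [exact H0 | apply Rlt_le, Rinv_0_lt_compat; lra].
  - unfold Rdiv. rewrite <- (Rmult_1_r (Hs rest N)) at 2. apply Rmult_le_compat_l; [exact H0|].
    rewrite <- Rinv_1. apply Rinv_le_contravar; lra.
Qed.

Lemma Hs_bounds l N : 0 <= Hs l N <= INR N ^ length l.
Proof.
  revert N. induction l as [|k rest IH]; intros N; [simpl; lra|].
  simpl Hs. simpl length. simpl pow. apply psum_bounds. intros n Hn.
  destruct (_ && _) eqn:E; [|split; [lra | apply pow_le, pos_INR]].
  apply andb_prop in E as [E _]. assert (E1 : (1 <= n)%nat) by (destruct n; [discriminate | lia]).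
  destruct (IH n) as [H0 H1]. pose proof (term_le_Hs rest n k E1 H0).
  split; [lra|]. apply Rle_trans with (INR n ^ length rest); [lra|].
  apply pow_incr. split; [apply pos_INR | apply le_INR; lia].
Qed.

Lemma poly_bounded_acoef ks : poly_bounded (acoef ks).
Proof.
  destruct ks as [|k0 ks'].
  - exists 1, O. intros N. simpl. unfold unit_seq.
    destruct (N =? 0)%nat; rewrite ?Rabs_R1, ?Rabs_R0; lra.
  - change (acoef (k0 :: ks')) with (Acoef (k0 :: ks')). set (ks := k0 :: ks'). clearbody ks.
    exists (2 ^ length ks), (length ks). intros N. pose proof (pos_INR N). unfold Acoef.
    assert (Hpos : 0 <= (INR N + 1) ^ length ks) by (apply pow_le; lra).
    destruct (rev ks) as [|k rest] eqn:E.
    { rewrite Rabs_R0. apply Rmult_le_pos; [apply pow_le; lra | exact Hpos]. }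
    assert (HL : (length rest < length ks)%nat).
    { apply (f_equal (@length nat)) in E. rewrite length_rev in E. simpl in E. lia. }
    rewrite Rabs_mult, Rabs_pos_eq by (apply pow_le; lra).
    apply Rmult_le_compat_l; [apply pow_le; lra|].
    destruct (_ && _) eqn:E2; [|rewrite Rabs_R0; exact Hpos].
    apply andb_prop in E2 as [E2 _]. assert (E1 : (1 <= N)%nat) by (destruct N; [discriminate | lia]).
    destruct (Hs_bounds rest N) as [H0 H1]. pose proof (term_le_Hs rest N k E1 H0).
    rewrite Rabs_pos_eq by lra.
    assert (INR N ^ length rest <= (INR N + 1) ^ length rest) by (apply pow_incr; lra).
    assert ((INR N + 1) ^ length rest <= (INR N + 1) ^ length ks) by (apply Rle_pow; lia || lra).
    lra.
Qed.

End LevelTwoCoefficients.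

Section Compositions.

(* Binomial coefficients on [nat] by Pascal's rule; unlike [Binomial.C] they
   vanish above the diagonal, which makes Pascal's rule hold unconditionally. *)
Fixpoint binom (n k : nat) : nat :=
  match n, k with
  | _, O => 1%nat
  | O, S _ => 0%nat
  | S n', S k' => (binom n' k' + binom n' (S k'))%nat
  end.

Lemma binom_above n k : (n < k)%nat -> binom n k = 0%nat.
Proof.
  revert k. induction n; intros k H; destruct k; try lia; simpl; auto.
  rewrite !IHn by lia. reflexivity.
Qed.

Lemma binom_diag n : binom n n = 1%nat.
Proof. induction n; simpl; auto. rewrite IHn, binom_above by lia. reflexivity. Qed.

Lemma binom_0 n : binom n 0 = 1%nat.
Proof. destruct n; reflexivity. Qed.

Lemma Binomial_C_binom n k : (k <= n)%nat -> Binomial.C n k = INR (binom n k).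
Proof.
  revert k. induction n; intros k H.
  - replace k with O by lia. rewrite C_n_0. reflexivity.
  - destruct k as [|k]; [rewrite C_n_0; reflexivity|].
    simpl binom. rewrite plus_INR.
    destruct (Nat.eq_dec k n) as [->|Hne].
    + rewrite C_n_n, binom_diag, binom_above by lia. simpl. ring.
    + rewrite <- pascal by lia. rewrite !IHn by lia. reflexivity.
Qed.

Lemma compositions_spec r K ks :
  In ks (compositions r K) -> length ks = r /\ (forall x, In x ks -> (1 <= x)%nat).
Proof.
  revert K ks. induction r; intros K ks H; simpl in H.
  - destruct (K =? 0)%nat; simpl in H; [|destruct H].
    destruct H as [<-|[]]. split; [reflexivity | intros _ []].
  - apply in_flat_map in H as [k [Hk H]]. apply in_map_iff in H as [ks' [<- H]].
    apply IHr in H as [H1 H2]. apply in_seq in Hk. simpl. split; [auto|].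
    intros x [<-|Hx]; [lia | auto].
Qed.

Lemma compositions_nonnil r K ks : In ks (compositions (S r) K) -> ks <> [].
Proof. intros H. apply compositions_spec in H as [H _]. intros ->. discriminate. Qed.

Lemma compositions_last_pos r K ks : In ks (compositions (S r) K) -> (1 <= last ks 0)%nat.
Proof.
  intros H. pose proof (compositions_nonnil _ _ _ H) as Hn.
  apply compositions_spec in H as [_ H]. apply H.
  rewrite (app_removelast_last 0%nat Hn) at 2. apply in_or_app. right. left. reflexivity.
Qed.

Lemma flat_map_nil {A B} (f : A -> list B) l : (forall x, In x l -> f x = []) -> flat_map f l = [].
Proof. induction l; simpl; intros H; [|rewrite H, IHl]; auto. Qed.

Lemma compositions_small r K : (K < r)%nat -> compositions r K = [].
Proof.
  revert K. induction r; intros K H; [lia|].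
  simpl. apply flat_map_nil. intros k Hk. apply in_seq in Hk. rewrite IHr by lia. reflexivity.
Qed.

Lemma compositions_diag r : compositions r r = [repeat 1%nat r].
Proof.
  induction r; [reflexivity|].
  simpl. rewrite Nat.sub_0_r, IHr. simpl. rewrite flat_map_nil; [reflexivity|].
  intros k Hk. apply in_seq in Hk. destruct k; [lia|]. rewrite compositions_small by lia. reflexivity.
Qed.

Lemma compositions_one K : (1 <= K)%nat -> compositions 1 K = [[K]].
Proof.
  intros HK. destruct K as [|K]; [lia|]. unfold compositions.
  rewrite seq_S, flat_map_app, flat_map_nil.
  - simpl. rewrite Nat.sub_diag. reflexivity.
  - intros k Hk. apply in_seq in Hk.
    replace (S K - k =? 0)%nat with false by (symmetry; apply Nat.eqb_neq; lia). reflexivity.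
Qed.

Lemma rsum_compositions_last r K f :
  rsum (compositions (S r) K) f =
  rsum (seq 1 K) (fun l => rsum (compositions r (K - l)) (fun ks => f (ks ++ [l]))).
Proof.
  revert K f. induction r; intros K f.
  - simpl compositions. rewrite rsum_flat_map. apply rsum_ext. intros k.
    rewrite rsum_map. simpl. destruct (K - k =? 0)%nat; reflexivity.
  - change (compositions (S (S r)) K)
      with (flat_map (fun k => map (cons k) (compositions (S r) (K - k))) (seq 1 K)).
    rewrite rsum_flat_map.
    rewrite (rsum_ext _ _ (fun k => rsum (seq 1 (K - k)) (fun l =>
               rsum (compositions r (K - k - l)) (fun ks => f (k :: ks ++ [l]))))).
    2:{ intros k. rewrite rsum_map, IHr. reflexivity. }
    rewrite rsum_triangle_swap. apply rsum_ext. intros l.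
    simpl compositions. rewrite rsum_flat_map. apply rsum_ext. intros k.
    rewrite rsum_map. replace (K - k - l)%nat with (K - l - k)%nat by lia. reflexivity.
Qed.

Lemma add_last_snoc ks l x : add_last (ks ++ [l]) x = ks ++ [(l + x)%nat].
Proof. unfold add_last. rewrite removelast_last, last_last. reflexivity. Qed.

End Compositions.

Section SequenceIdentity.

(* Coefficients of A({1}_{a-1}, b+1; z) for a >= 1, and of 1 for a = 0. *)
Definition ones_word (a b : nat) : nat -> R :=
  match a with O => unit_seq | S a' => acoef (repeat 1%nat a' ++ [S b]) end.

(* Coefficients of the first sum of the theorem for (m, k) = (mm+1, kk+1). *)
Definition weighted_sum (r mm kk : nat) (N : nat) : R :=
  rsum (compositions r (kk + r))
       (fun ks => INR (binom (last ks 0%nat + mm - 1) mm) * acoef (add_last ks mm) N).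

Definition comp_sum (r kk : nat) (N : nat) : R :=
  rsum (compositions r (kk + r)) (fun ks => acoef ks N).

Definition lhs_seq (r mm kk : nat) (N : nat) : R :=
  weighted_sum r mm kk N + (-1) ^ r * weighted_sum r kk mm N.

Definition rhs_seq (r mm kk : nat) (N : nat) : R :=
  rsum (seq 1 (r - 1)) (fun j => (-1) ^ (j - 1) * conv (ones_word (r - j) mm) (ones_word j kk) N).

Lemma acoef_repeat a : acoef (repeat 1%nat a) = ones_word a 0.
Proof. destruct a; [reflexivity|]. simpl ones_word. rewrite <- repeat_cons. reflexivity. Qed.

Lemma theta_ones_word_succ a b : (1 <= a)%nat -> theta (ones_word a (S b)) = ones_word a b.
Proof. intros Ha. destruct a; [lia|]. exact (theta_acoef_succ (repeat 1%nat a) (S b)). Qed.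

Lemma theta_ones_word_one a : (1 <= a)%nat -> theta (ones_word a 0) = conv odd_two (ones_word (a - 1) 0).
Proof.
  intros Ha. destruct a as [|a]; [lia|]. rewrite Nat.sub_1_r. simpl pred.
  change (theta (acoef (repeat 1%nat a ++ [1%nat])) = conv odd_two (ones_word a 0)).
  rewrite theta_acoef_one, acoef_repeat. reflexivity.
Qed.

Lemma ones_word_at0 a b : (1 <= a)%nat -> ones_word a b O = 0.
Proof. intros Ha. destruct a; [lia|]. apply acoef_at0. destruct a; discriminate. Qed.

Lemma weighted_sum_at0 r mm kk : weighted_sum (S r) mm kk O = 0.
Proof.
  apply rsum_zero. intros ks _. unfold add_last. rewrite acoef_at0; [ring|].
  destruct (removelast ks); discriminate.
Qed.

Lemma comp_sum_at0 r kk : comp_sum (S r) kk O = 0.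
Proof. apply rsum_zero. intros ks H. apply acoef_at0. eapply compositions_nonnil; eauto. Qed.

Lemma rhs_seq_at0 r mm kk : rhs_seq r mm kk O = 0.
Proof.
  apply rsum_zero. intros j Hj. apply in_seq in Hj.
  rewrite conv_at0, (ones_word_at0 j) by lia. ring.
Qed.

Lemma weighted_sum_mm0 r kk : weighted_sum (S r) 0 kk = comp_sum (S r) kk.
Proof.
  apply functional_extensionality. intros N. apply rsum_ext_in. intros ks Hks.
  rewrite binom_0, Rmult_1_l. unfold add_last. rewrite Nat.add_0_r, <- app_removelast_last.
  - reflexivity.
  - eapply compositions_nonnil; eauto.
Qed.

Lemma weighted_sum_kk0 r kk : weighted_sum (S r) kk 0 = ones_word (S r) kk.
Proof.
  apply functional_extensionality. intros N. unfold weighted_sum. simpl (0 + S r)%nat.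
  rewrite compositions_diag. unfold rsum; cbn [fold_right repeat].
  rewrite repeat_cons, add_last_snoc, last_last.
  replace (1 + kk - 1)%nat with kk by lia. rewrite binom_diag. simpl. ring.
Qed.

Lemma comp_sum_kk0 r : comp_sum (S r) 0 = ones_word (S r) 0.
Proof.
  apply functional_extensionality. intros N. unfold comp_sum. simpl (0 + S r)%nat.
  rewrite compositions_diag. unfold rsum; cbn [fold_right]. rewrite acoef_repeat. ring.
Qed.

Lemma comp_sum_one kk : comp_sum 1 kk = ones_word 1 kk.
Proof.
  apply functional_extensionality. intros N. unfold comp_sum.
  rewrite compositions_one by lia. simpl. rewrite Nat.add_1_r. ring.
Qed.

(* theta of the weighted sum: Pascal's rule on the weight splits
   binom(l+a, a+1) = binom(l+a-1, a) + binom(l+a-1, a+1); the first part lowers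
   mm, the second (after shifting the last part l to l+1) lowers kk. *)
Lemma theta_weighted_sum r a b :
  theta (weighted_sum (S r) (S a) (S b)) =
  fun N => weighted_sum (S r) a (S b) N + weighted_sum (S r) (S a) b N.
Proof.
  unfold weighted_sum. rewrite theta_rsum. apply functional_extensionality. intros N.
  rewrite !rsum_compositions_last.
  set (K := (S b + S r)%nat).
  replace (b + S r)%nat with (K - 1)%nat by (unfold K; lia).
  rewrite (rsum_ext_in (seq 1 K) _ (fun l =>
      rsum (compositions r (K - l)) (fun ks => INR (binom (l + a - 1) a) * acoef (ks ++ [(l + a)%nat]) N)
    + rsum (compositions r (K - l)) (fun ks => INR (binom (l + a - 1) (S a)) * acoef (ks ++ [(l + a)%nat]) N))).
  2:{ intros l Hl. apply in_seq in Hl. rewrite <- rsum_plus. apply rsum_ext. intros ks.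
      rewrite add_last_snoc, last_last.
      replace (binom (l + S a - 1) (S a)) with (binom (l + a - 1) a + binom (l + a - 1) (S a))%nat
        by (replace (l + S a - 1)%nat with (S (l + a - 1)) by lia; reflexivity).
      rewrite plus_INR. replace (l + S a)%nat with (S (l + a)) by lia.
      rewrite <- (theta_acoef_succ ks (l + a)). unfold theta. ring. }
  rewrite rsum_plus. f_equal.
  - apply rsum_ext. intros l. apply rsum_ext. intros ks. rewrite add_last_snoc, last_last. reflexivity.
  - replace K with (S (K - 1)) at 1 by (unfold K; lia). rewrite rsum_seq_first.
    rewrite rsum_zero by (intros ks _; rewrite binom_above by lia; simpl; ring).
    rewrite Rplus_0_l. apply rsum_ext. intros l.
    replace (K - S l)%nat with (K - 1 - l)%nat by lia.
    apply rsum_ext. intros ks. rewrite add_last_snoc, last_last.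
    replace (S l + a - 1)%nat with (l + S a - 1)%nat by lia.
    replace (S l + a)%nat with (l + S a)%nat by lia. reflexivity.
Qed.

(* theta of the unweighted sum: compositions with last part 1 contribute
   J times a sum of lower depth, the others lower kk. *)
Lemma theta_comp_sum r kk :
  theta (comp_sum (S r) (S kk)) = fun N => conv odd_two (comp_sum r (S kk)) N + comp_sum (S r) kk N.
Proof.
  unfold comp_sum. rewrite theta_rsum. apply functional_extensionality. intros N.
  rewrite !rsum_compositions_last.
  set (K := (S kk + S r)%nat).
  replace (kk + S r)%nat with (K - 1)%nat by (unfold K; lia).
  replace K with (S (K - 1)) at 1 by (unfold K; lia). rewrite rsum_seq_first. f_equal.
  - rewrite (conv_rsum_r odd_two (compositions r (S kk + r)) acoef).
    replace (K - 1)%nat with (S kk + r)%nat by (unfold K; lia).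
    apply rsum_ext. intros ks. rewrite theta_acoef_one. reflexivity.
  - apply rsum_ext. intros l. replace (K - S l)%nat with (K - 1 - l)%nat by lia.
    apply rsum_ext. intros ks. rewrite theta_acoef_succ. reflexivity.
Qed.

Lemma theta_rhs_seq r mm kk :
  theta (rhs_seq r mm kk) = fun N => rsum (seq 1 (r - 1)) (fun j => (-1) ^ (j - 1) *
    (conv (theta (ones_word (r - j) mm)) (ones_word j kk) N
     + conv (ones_word (r - j) mm) (theta (ones_word j kk)) N)).
Proof.
  unfold rhs_seq. rewrite theta_rsum. apply functional_extensionality. intros N. apply rsum_ext.
  intros j. rewrite <- (equal_f (theta_conv (ones_word (r - j) mm) (ones_word j kk)) N).
  unfold theta. ring.
Qed.

Lemma sign_square a : (-1) ^ a * (-1) ^ a = 1.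
Proof.
  rewrite <- pow_add. replace (a + a)%nat with (2 * a)%nat by lia.
  rewrite pow_mult. replace ((-1) ^ 2) with 1 by (simpl; ring). apply pow1.
Qed.

Lemma sign_reflect r j : (1 <= j)%nat -> (j <= r - 1)%nat ->
  (-1) ^ (r - j - 1) = (-1) ^ r * (-1) ^ (j - 1).
Proof.
  intros H1 H2. replace r with ((j - 1) + (r - j - 1) + 2)%nat at 2 by lia.
  rewrite !pow_add. simpl pow.
  replace ((-1) ^ (j - 1) * (-1) ^ (r - j - 1) * (-1 * (-1 * 1)) * (-1) ^ (j - 1))
    with (((-1) ^ (j - 1) * (-1) ^ (j - 1)) * (-1) ^ (r - j - 1)) by ring.
  rewrite sign_square. ring.
Qed.

(* Reversing j <-> r - j exchanges the roles of mm and kk. *)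
Lemma rhs_seq_swap r mm kk : (1 <= r)%nat -> rhs_seq r kk mm = fun N => (-1) ^ r * rhs_seq r mm kk N.
Proof.
  intros Hr. apply functional_extensionality. intros N. unfold rhs_seq.
  rewrite rsum_seq_rev, <- rsum_scal. apply rsum_ext_in. intros j Hj. apply in_seq in Hj.
  replace (S (r - 1) - j)%nat with (r - j)%nat by lia.
  replace (r - (r - j))%nat with j by lia.
  rewrite (conv_comm (ones_word j kk)), sign_reflect by lia. ring.
Qed.

End SequenceIdentity.

Section MEqualsOne.

(* The identity for m = 1: the binomial weights of the first sum are all 1
   and the second sum reduces to the single word {1}_{r-1}, kk+1. *)
Definition m1_identity (r kk : nat) : Prop :=
  (fun N => comp_sum r kk N + (-1) ^ r * ones_word r kk N) = rhs_seq r 0 kk.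

(* k = 1 as well: the right-hand side telescopes, because both factors
   satisfy theta A({1}_a, 1) = J A({1}_{a-1}). *)
Lemma rhs_seq_telescope r :
  rhs_seq (S r) 0 0 = fun N => (1 + (-1) ^ S r) * ones_word (S r) 0 N.
Proof.
  apply theta_inj.
  { rewrite rhs_seq_at0, ones_word_at0 by lia. ring. }
  rewrite theta_rhs_seq. apply functional_extensionality. intros N.
  set (g := fun i => conv odd_two (conv (ones_word (r - i) 0) (ones_word i 0)) N).
  rewrite (rsum_ext_in _ _ (fun j => (-1) ^ (j - 1) * (g j + g (j - 1)%nat))).
  2:{ intros j Hj. apply in_seq in Hj. unfold g.
      rewrite !theta_ones_word_one by lia.
      rewrite conv_assoc, (conv_left_comm (ones_word (S r - j) 0)).
      replace (S r - j - 1)%nat with (r - j)%nat by lia.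
      replace (S r - j)%nat with (r - (j - 1))%nat by lia. reflexivity. }
  rewrite Nat.sub_1_r, rsum_telescope. unfold g. simpl Nat.pred.
  rewrite Nat.sub_0_r, Nat.sub_diag, conv_unit_r.
  change (ones_word 0 0) with unit_seq. rewrite conv_unit_l.
  replace (theta (fun M => (1 + (-1) ^ S r) * ones_word (S r) 0 M) N)
    with ((1 + (-1) ^ S r) * theta (ones_word (S r) 0) N) by (unfold theta; ring).
  rewrite theta_ones_word_one by lia. simpl (S r - 1)%nat. rewrite Nat.sub_0_r. simpl pow. ring.
Qed.

Lemma rhs_seq_extend r kk N : (1 <= r)%nat ->
  rsum (seq 1 r) (fun j => (-1) ^ (j - 1) * conv (ones_word (r - j) 0) (ones_word j kk) N) =
  rhs_seq r 0 kk N + (-1) ^ (r - 1) * ones_word r kk N.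
Proof.
  intros Hr. destruct r as [|r]; [lia|]. rewrite rsum_seq_last. unfold rhs_seq.
  rewrite Nat.sub_diag. change (ones_word 0 0) with unit_seq. rewrite conv_unit_l.
  replace (S r - 1)%nat with r by lia. reflexivity.
Qed.

(* Inductive step in k: apply theta, then use the identity for (r-1, k+1)
   on the terms containing J and the identity for (r, k) on the others. *)
Lemma m1_identity_step r kk : (1 <= r)%nat ->
  m1_identity r (S kk) -> m1_identity (S r) kk -> m1_identity (S r) (S kk).
Proof.
  intros Hr IHr IHk. apply theta_inj.
  { rewrite rhs_seq_at0, comp_sum_at0, ones_word_at0 by lia. ring. }
  rewrite theta_rhs_seq. apply functional_extensionality. intros N.
  transitivity (theta (comp_sum (S r) (S kk)) N + (-1) ^ S r * theta (ones_word (S r) (S kk)) N).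
  { unfold theta. ring. }
  rewrite theta_comp_sum, theta_ones_word_succ by lia.
  rewrite (rsum_ext_in _ _ (fun j =>
      (-1) ^ (j - 1) * conv odd_two (conv (ones_word (r - j) 0) (ones_word j (S kk))) N
    + (-1) ^ (j - 1) * conv (ones_word (S r - j) 0) (ones_word j kk) N)).
  2:{ intros j Hj. apply in_seq in Hj.
      rewrite theta_ones_word_one, theta_ones_word_succ, conv_assoc by lia.
      replace (S r - j - 1)%nat with (r - j)%nat by lia. ring. }
  rewrite rsum_plus. change (rsum _ _) with (rhs_seq (S r) 0 kk N) at 2.
  rewrite <- IHk.
  assert (Hlow : (fun M => rsum (seq 1 r) (fun j =>
                    (-1) ^ (j - 1) * conv (ones_word (r - j) 0) (ones_word j (S kk)) M))
                 = comp_sum r (S kk)).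
  { apply functional_extensionality. intros M. rewrite rhs_seq_extend by exact Hr.
    rewrite <- IHr. destruct r as [|r]; [lia|].
    rewrite Nat.sub_1_r. simpl pow. simpl pred. ring. }
  replace (S r - 1)%nat with r by lia.
  rewrite (rsum_ext _ _ (fun j => conv odd_two (fun M =>
             (-1) ^ (j - 1) * conv (ones_word (r - j) 0) (ones_word j (S kk)) M) N))
    by (intros j; rewrite conv_scal_r; reflexivity).
  rewrite <- (equal_f (conv_rsum_r odd_two (seq 1 r) (fun j M =>
             (-1) ^ (j - 1) * conv (ones_word (r - j) 0) (ones_word j (S kk)) M)) N).
  rewrite Hlow. ring.
Qed.

Lemma m1_identity_holds r kk : (1 <= r)%nat -> m1_identity r kk.
Proof.
  intros Hr. destruct r as [|r0]; [lia|]. clear Hr.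
  revert kk. induction r0 as [|r0 IHr]; intros kk.
  - unfold m1_identity. rewrite comp_sum_one. apply functional_extensionality. intros N.
    unfold rhs_seq. simpl. ring.
  - induction kk as [|kk IHk].
    + unfold m1_identity. rewrite comp_sum_kk0, rhs_seq_telescope.
      apply functional_extensionality. intros N. ring.
    + apply m1_identity_step; [lia | apply IHr | exact IHk].
Qed.

End MEqualsOne.

Lemma lhs_rhs_m1 r kk : (1 <= r)%nat -> lhs_seq r 0 kk = rhs_seq r 0 kk.
Proof.
  intros Hr. rewrite <- (m1_identity_holds r kk Hr). destruct r as [|r]; [lia|].
  apply functional_extensionality. intros N. unfold lhs_seq.
  rewrite weighted_sum_mm0, weighted_sum_kk0. reflexivity.
Qed.

Theorem lhs_rhs_seq r mm kk : (1 <= r)%nat -> lhs_seq r mm kk = rhs_seq r mm kk.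
Proof.
  intros Hr. revert kk. induction mm as [|a IHa]; intros kk; [apply lhs_rhs_m1, Hr|].
  induction kk as [|b IHb].
  - (* k = 1: by the symmetry of both sides, this is the case m = 1. *)
    transitivity (fun N => (-1) ^ r * lhs_seq r 0 (S a) N).
    { apply functional_extensionality. intros N. unfold lhs_seq.
      rewrite Rmult_plus_distr_l, <- Rmult_assoc, sign_square. ring. }
    rewrite lhs_rhs_m1, (rhs_seq_swap r 0 (S a)) by exact Hr. reflexivity.
  - (* theta lowers (m, k) to (m - 1, k) and (m, k - 1) on both sides. *)
    destruct r as [|r']; [lia|]. apply theta_inj.
    + unfold lhs_seq. rewrite !weighted_sum_at0, rhs_seq_at0. ring.
    + transitivity (fun N => lhs_seq (S r') a (S b) N + lhs_seq (S r') (S a) b N).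
      { apply functional_extensionality. intros N.
        pose proof (equal_f (theta_weighted_sum r' a b) N) as Hab.
        pose proof (equal_f (theta_weighted_sum r' b a) N) as Hba.
        unfold lhs_seq, theta in *. rewrite Rmult_plus_distr_l, Hab.
        replace (INR N * ((-1) ^ S r' * weighted_sum (S r') (S b) (S a) N))
          with ((-1) ^ S r' * (INR N * weighted_sum (S r') (S b) (S a) N)) by ring.
        rewrite Hba. ring. }
      rewrite IHa, IHb, theta_rhs_seq. apply functional_extensionality. intros N.
      unfold rhs_seq. rewrite <- rsum_plus. apply rsum_ext_in. intros j Hj. apply in_seq in Hj.
      rewrite !theta_ones_word_succ by lia. ring.
Qed.

Section BackToPowerSeries.

Variable z : C.
Hypothesis Hz : (Cmod z < 1)%R.

Lemma poly_bounded_rsum {T} (l : list T) (c : T -> R) (a : T -> nat -> R) :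
  (forall x, In x l -> poly_bounded (a x)) -> poly_bounded (fun N => rsum l (fun x => c x * a x N)).
Proof.
  induction l as [|x l IH]; intros H; simpl; [apply poly_bounded_zero|].
  apply poly_bounded_plus; [apply poly_bounded_scal, H; left; reflexivity|].
  apply IH. intros; apply H; right; assumption.
Qed.

Lemma Csum_ext_in {T} (l : list T) (f g : T -> C) :
  (forall x, In x l -> f x = g x) -> Csum l f = Csum l g.
Proof. induction l; simpl; intros H; [|rewrite H, IHl]; auto. Qed.

Lemma Csum_pseries {T} (l : list T) (c : T -> R) (a : T -> nat -> R) :
  (forall x, In x l -> poly_bounded (a x)) ->
  Csum l (fun x => Cmult (RtoC (c x)) (pseries (a x) z)) =
  pseries (fun N => rsum l (fun x => c x * a x N)) z.
Proof.
  induction l as [|x l IH]; intros H; simpl; [symmetry; apply pseries_zero, Hz|].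
  assert (Hl : forall y, In y l -> poly_bounded (a y)) by (intros; apply H; right; assumption).
  rewrite pseries_plus, pseries_scal, IH; auto.
  - apply H. left. reflexivity.
  - apply poly_bounded_scal, H. left. reflexivity.
  - apply poly_bounded_rsum, Hl.
Qed.

Lemma poly_bounded_ones_word a b : poly_bounded (ones_word a b).
Proof. destruct a; [exact (poly_bounded_acoef []) | apply poly_bounded_acoef]. Qed.

Lemma Apoly_snoc ks y : Apoly (ks ++ [y]) z = pseries (acoef (ks ++ [y])) z.
Proof. rewrite acoef_snoc. reflexivity. Qed.

Lemma weighted_sum_pseries r mm kk :
  Csum (compositions (S r) (S kk + S r - 1)%nat)
    (fun ks => Cmult (Cbinom (last ks 0 + S mm - 2)%nat (S mm - 1)%nat)
                     (Apoly (add_last ks (S mm - 1)%nat) z))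
  = pseries (weighted_sum (S r) mm kk) z.
Proof.
  replace (S kk + S r - 1)%nat with (kk + S r)%nat by lia.
  replace (S mm - 1)%nat with mm by lia.
  unfold weighted_sum. rewrite <- Csum_pseries by (intros; apply poly_bounded_acoef).
  apply Csum_ext_in. intros ks Hks. pose proof (compositions_last_pos _ _ _ Hks). f_equal.
  - unfold Cbinom. rewrite Binomial_C_binom by lia. do 3 f_equal. lia.
  - unfold add_last. apply Apoly_snoc.
Qed.

Lemma rhs_seq_pseries r mm kk :
  Csum (seq 1 (S r - 1)%nat)
    (fun j => Cmult (RtoC ((-1) ^ (j - 1)%nat)%R)
                (Cmult (Apoly (repeat 1%nat (S r - 1 - j)%nat ++ [S mm]) z)
                       (Apoly (repeat 1%nat (j - 1)%nat ++ [S kk]) z)))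
  = pseries (rhs_seq (S r) mm kk) z.
Proof.
  unfold rhs_seq.
  rewrite <- Csum_pseries by (intros; apply poly_bounded_conv; apply poly_bounded_ones_word).
  apply Csum_ext_in. intros j Hj. apply in_seq in Hj. f_equal.
  rewrite (pseries_conv z Hz) by apply poly_bounded_ones_word. rewrite !Apoly_snoc. f_equal; f_equal.
  - replace (S r - j)%nat with (S (S r - 1 - j)) by lia. reflexivity.
  - destruct j as [|j]; [lia|]. simpl. rewrite Nat.sub_0_r. reflexivity.
Qed.

End BackToPowerSeries.

Theorem mainTheorem15 (m k r : nat) (z : C) :
  (0 < m)%nat -> (0 < k)%nat -> (0 < r)%nat -> (Cmod z < 1)%R ->
  Cplus
    (Csum (compositions r (k + r - 1)%nat)
       (fun ks => Cmult (Cbinom (last ks 0 + m - 2)%nat (m - 1)%nat) (Apoly (add_last ks (m - 1)%nat) z)))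
    (Cmult (RtoC ((-1) ^ r)%R)
       (Csum (compositions r (m + r - 1)%nat)
          (fun ks => Cmult (Cbinom (last ks 0 + k - 2)%nat (k - 1)%nat) (Apoly (add_last ks (k - 1)%nat) z))))
  =
  Csum (seq 1 (r - 1)%nat)
    (fun j => Cmult (RtoC ((-1) ^ (j - 1)%nat)%R)
                (Cmult (Apoly (repeat 1%nat (r - 1 - j)%nat ++ [m]) z)
                       (Apoly (repeat 1%nat (j - 1)%nat ++ [k]) z))).
Proof.
  intros Hm Hk Hr Hz.
  destruct m as [|mm]; [lia|]. destruct k as [|kk]; [lia|]. destruct r as [|r]; [lia|].
  rewrite (weighted_sum_pseries z Hz r mm kk), (weighted_sum_pseries z Hz r kk mm),
          (rhs_seq_pseries z Hz r mm kk).
  assert (Hb : forall a b, poly_bounded (weighted_sum (S r) a b)).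
  { intros a b. apply poly_bounded_rsum. intros; apply poly_bounded_acoef. }
  rewrite <- (pseries_scal z Hz) by apply Hb.
  rewrite <- (pseries_plus z Hz) by (apply Hb || apply poly_bounded_scal, Hb).
  change (pseries (lhs_seq (S r) mm kk) z = pseries (rhs_seq (S r) mm kk) z).
  rewrite lhs_rhs_seq by lia. reflexivity.
Qed.
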